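(* Let $k$ be an algebraically closed field of characteristic zero and let $m\geq 1$ be an integer. There exists an irreducible polynomial $\xi_m\in k[x,y]$, unique up to multiplication by a nonzero constant, such that (1) $\xi_m$ vanishes to order $m$ at the point $t_0=(1,1)$, and (2) the Newton polygon of $\xi_m$ is the triangle with vertices $(0,0)$, $(m-1,0)$, $(m,m+1)$.
   Context: The Newton polygon of a polynomial $\sum c_{ij}x^iy^j$ is the convex hull of the exponents $(i,j)$ with $c_{ij}\neq 0$. *)

From HB Require Import structures.
From mathcomp Require Import all_boot all_order all_algebra.
Set Implicit Arguments. Unset Strict Implicit. Unset Printing Implicit Defensive.
Import Order.TTheory GRing.Theory Num.Theory.
Local Open Scope ring_scope.

(* Bivariate polynomials k[x,y] are represented as p : {poly {poly k}}:
   the outer variable is y, the inner one is x, so the coefficient of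
   x^i y^j in p is (p`_j)`_i. *)

Definition coefXY (k : nzRingType) (p : {poly {poly k}}) (i j : nat) : k :=
  (p`_j)`_i.

Definition shiftXY (k : comNzRingType) (p : {poly {poly k}}) (a b : k)
  : {poly {poly k}} :=
  (map_poly (fun c : {poly k} => c \Po ('X + a%:P)) p) \Po ('X + (b%:P)%:P).

Definition vanishes_atleast (k : comNzRingType) (p : {poly {poly k}})
  (a b : k) (m : nat) : Prop :=
  forall i j : nat, (i + j < m)%N -> coefXY (shiftXY p a b) i j = 0.

Definition vanishes_to_order (k : comNzRingType) (p : {poly {poly k}})
  (a b : k) (m : nat) : Prop :=
  vanishes_atleast p a b m /\ ~ vanishes_atleast p a b m.+1.

Definition irreducibleXY (k : idomainType) (p : {poly {poly k}}) : Prop :=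
  p != 0 /\ p \isn't a GRing.unit /\
  forall q r : {poly {poly k}}, p = q * r -> q \is a GRing.unit \/ r \is a GRing.unit.

Definition supportXY (k : nzRingType) (p : {poly {poly k}}) : seq (rat * rat) :=
  [seq ((ij.1)%:R, (ij.2)%:R) |
     ij <- [seq (i, j) | j <- iota 0 (size p), i <- iota 0 (size p`_j)]
     & coefXY p ij.1 ij.2 != 0].

Definition in_conv_hull (S : seq (rat * rat)) (z : rat * rat) : Prop :=
  exists w : 'I_(size S) -> rat,
    (forall i, 0 <= w i) /\ \sum_i w i = 1 /\
    \sum_i w i * (S`_i).1 = z.1 /\ \sum_i w i * (S`_i).2 = z.2.

Definition newton_polygon (k : nzRingType) (p : {poly {poly k}})
  (z : rat * rat) : Prop := in_conv_hull (supportXY p) z.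

Definition triangle_m (m : nat) (z : rat * rat) : Prop :=
  in_conv_hull [:: (0, 0); ((m.-1)%:R, 0); (m%:R, (m.+1)%:R)] z.

Definition xi_property (k : closedFieldType) (m : nat) (p : {poly {poly k}}) : Prop :=
  [/\ irreducibleXY p, vanishes_to_order p 1 1 m &
      forall z, newton_polygon p z <-> triangle_m m z].

From HB Require Import structures.
From mathcomp Require Import all_boot all_order all_algebra.
From mathcomp Require Import ring lra zify.
Set Implicit Arguments. Unset Strict Implicit. Unset Printing Implicit Defensive.
Import Order.TTheory GRing.Theory Num.Theory.
Local Open Scope ring_scope.

(* Let xi_m := ((1 - xy)^(m+1) - x^m (1 - y)^(m+1)) / (1 - x).  Its coefficient of x^i y^j
   is (-1)^j C(m+1, j) for j <= i < m and (-1)^m at (m, m+1), which gives its Newton polygon.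
   After the substitution (x + 1, y + 1) the numerator reads
   (-(x + y + xy))^(m+1) - (x + 1)^m (-y)^(m+1): it has order m + 1 and contains the
   monomial x^(m+1), so xi_m vanishes to order exactly m at (1, 1).
   Uniqueness: if q has the same Newton polygon and vanishes to order m at (1, 1), then
   p := q - c xi_m, with c chosen to kill the coefficient of x^m y^(m+1), is supported in
   {j <= i < m} and vanishes to order m at (1, 1).  Then p(x, 1) has degree < m, so it is
   zero, p = x (y - 1) p' with p' of the same shape for m - 1, and p = 0 by induction.
   Irreducibility: xi_m vanishes on the rational curve x = t^(m+1),
   y = -(1 + t + ... + t^(m-1)) / t^m, on which no nonzero polynomial of y-degree <= m
   vanishes, because the t-adic valuations of its terms are distinct modulo m + 1.  So if
   xi_m = q r and q vanishes on the curve, r has y-degree 0; then r lies in k[x] and divides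
   both the top coefficient +-x^m and the bottom coefficient, whose constant term is 1, so
   r is a constant. *)

Section CoefXY.
Variable k : nzRingType.
Local Notation R := {poly {poly k}}.
Local Notation x := ('X%:P : R).
Local Notation y := ('X : R).

Lemma coefXY_ext (p q : R) : (forall i j, coefXY p i j = coefXY q i j) -> p = q.
Proof. by move=> epq; apply/polyP => j; apply/polyP => i; apply: epq. Qed.

Lemma coefXYD (p q : R) i j : coefXY (p + q) i j = coefXY p i j + coefXY q i j.
Proof. by rewrite /coefXY !coefD. Qed.

Lemma coefXYN (p : R) i j : coefXY (- p) i j = - coefXY p i j.
Proof. by rewrite /coefXY !coefN. Qed.

Lemma coefXYB (p q : R) i j : coefXY (p - q) i j = coefXY p i j - coefXY q i j.
Proof. by rewrite /coefXY !coefB. Qed.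

Lemma coefXYCM (c : k) (p : R) i j : coefXY (c%:P%:P * p) i j = c * coefXY p i j.
Proof. by rewrite /coefXY !coefCM. Qed.

Lemma coefXY1 i j : coefXY (1 : R) i j = ((i == 0) && (j == 0))%:R.
Proof. by rewrite /coefXY coef1; case: (j == 0); rewrite ?coef1 ?coef0 ?andbT ?andbF. Qed.

Lemma coefXYxM (p : R) i j :
  coefXY (x * p) i j = if i is i'.+1 then coefXY p i' j else 0.
Proof. by rewrite /coefXY coefCM coefXM; case: i. Qed.

Lemma coefXYyM (p : R) i j :
  coefXY (y * p) i j = if j is j'.+1 then coefXY p i j' else 0.
Proof. by rewrite /coefXY coefXM; case: j => //=; rewrite coef0. Qed.

Lemma coefXYxnM n (p : R) i j :
  coefXY (x ^+ n * p) i j = if (n <= i)%N then coefXY p (i - n) j else 0.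
Proof. by rewrite /coefXY -rmorphXn /= coefCM coefXnM; case: ltnP. Qed.

Lemma coefXYM (p q : R) i j : coefXY (p * q) i j =
  \sum_(b < j.+1) \sum_(a < i.+1) coefXY p a b * coefXY q (i - a) (j - b).
Proof. by rewrite /coefXY coefM coef_sum; apply: eq_bigr => b _; rewrite coefM. Qed.

Definition vanishes_at0 (p : R) (n : nat) : Prop :=
  forall i j, (i + j < n)%N -> coefXY p i j = 0.

Lemma vanishes_at0D (p q : R) n :
  vanishes_at0 p n -> vanishes_at0 q n -> vanishes_at0 (p + q) n.
Proof. by move=> p_n q_n i j lt_n; rewrite coefXYD p_n ?q_n ?addr0. Qed.

Lemma vanishes_at0N (p : R) n : vanishes_at0 p n -> vanishes_at0 (- p) n.
Proof. by move=> p_n i j lt_n; rewrite coefXYN p_n ?oppr0. Qed.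

Lemma vanishes_at0B (p q : R) n :
  vanishes_at0 p n -> vanishes_at0 q n -> vanishes_at0 (p - q) n.
Proof. by move=> p_n q_n; apply/vanishes_at0D/vanishes_at0N. Qed.

Lemma vanishes_at0M (p q : R) a b :
  vanishes_at0 p a -> vanishes_at0 q b -> vanishes_at0 (p * q) (a + b).
Proof.
move=> p_a q_b i j lt_ab; rewrite coefXYM big1 // => -[b' /= lt_b'] _.
rewrite big1 // => -[a' /= lt_a'] _.
have [lt_a | le_a] := ltnP (a' + b') a; first by rewrite p_a ?mul0r.
by rewrite q_b ?mulr0 //; lia.
Qed.

Lemma vanishes_at0Ml (p q : R) n : vanishes_at0 p n -> vanishes_at0 (q * p) n.
Proof. by move=> p_n; rewrite -[n]add0n; apply: vanishes_at0M. Qed.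

Lemma vanishes_at0X (p : R) e : vanishes_at0 p 1 -> vanishes_at0 (p ^+ e) e.
Proof.
move=> p_1; elim: e => [|e IHe]; first by [].
by rewrite exprS -add1n; apply: vanishes_at0M.
Qed.

Lemma vanishes_at0x : vanishes_at0 x 1.
Proof. by move=> i j; rewrite -[x]mulr1 coefXYxM; case: i. Qed.

Lemma vanishes_at0y : vanishes_at0 y 1.
Proof. by move=> i j; rewrite -[y]mulr1 coefXYyM; case: j => //; lia. Qed.

Lemma vanishes_at0xM (p : R) n : vanishes_at0 (x * p) n.+1 -> vanishes_at0 p n.
Proof. by move=> xp_n i j lt_n; have := xp_n i.+1 j; rewrite coefXYxM; apply. Qed.

Lemma vanishes_at0yM (p : R) n : vanishes_at0 (y * p) n.+1 -> vanishes_at0 p n.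
Proof. by move=> yp_n i j lt_n; have := yp_n i j.+1; rewrite coefXYyM; apply; lia. Qed.

(* By induction on i: the coefficient of x^i y^j in (x + 1) p is p_(i,j) + p_(i-1,j). *)
Lemma vanishes_at0x1M (p : R) n : vanishes_at0 ((x + 1) * p) n -> vanishes_at0 p n.
Proof.
move=> xp_n; elim=> [|i IHi] j lt_n; have := xp_n _ j lt_n;
  rewrite mulrDl mul1r coefXYD coefXYxM ?add0r //.
by rewrite IHi ?add0r //; lia.
Qed.

End CoefXY.

Section Shift.
Variables (k : comNzRingType) (a b : k).
Local Notation R := {poly {poly k}}.
Local Notation x := ('X%:P : R).
Local Notation y := ('X : R).
Local Notation shift p := (shiftXY p a b).

Lemma shiftXYE (p : R) :
  shift p = comp_poly ('X + b%:P%:P) (map_poly (comp_poly ('X + a%:P)) p).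
Proof. by []. Qed.

Lemma shiftXYM (p q : R) : shift (p * q) = shift p * shift q.
Proof. by rewrite !shiftXYE !rmorphM. Qed.

Lemma shiftXYB (p q : R) : shift (p - q) = shift p - shift q.
Proof. by rewrite !shiftXYE !rmorphB. Qed.

Lemma shiftXYX (p : R) n : shift (p ^+ n) = shift p ^+ n.
Proof. by rewrite !shiftXYE !rmorphXn. Qed.

Lemma shiftXY1 : shift 1 = 1.
Proof. by rewrite shiftXYE !rmorph1. Qed.

Lemma shiftXYC (c : k) : shift c%:P%:P = c%:P%:P.
Proof. by rewrite shiftXYE map_polyC /= !comp_polyC. Qed.

Lemma shiftXYx : shift x = x + a%:P%:P.
Proof. by rewrite shiftXYE map_polyC /= comp_polyC comp_polyX rmorphD. Qed.

Lemma shiftXYy : shift y = y + b%:P%:P.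
Proof. by rewrite shiftXYE map_polyX comp_polyX. Qed.

Lemma shiftXY_coef0 (p : R) : (shift p)`_0 = p.[b%:P] \Po ('X + a%:P).
Proof.
rewrite -horner_coef0 shiftXYE horner_comp !hornerE /=.
by rewrite -[b%:P in LHS](comp_polyC b ('X + a%:P)) horner_map.
Qed.

End Shift.

Definition xi_coef (k : nzRingType) (m i j : nat) : k :=
  if (i == m) && (j == m.+1) then (-1) ^+ m
  else if (j <= i < m)%N then (-1) ^+ j *+ 'C(m.+1, j) else 0.

Definition xi (k : nzRingType) (m : nat) : {poly {poly k}} :=
  \poly_(j < m.+2) \poly_(i < m.+1) xi_coef k m i j.

Definition triangle_lattice (m i j : nat) : bool :=
  (j <= i < m)%N || (i == m) && (j == m.+1).

Section Xi.
Variables (k : comNzRingType) (m : nat).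
Local Notation R := {poly {poly k}}.
Local Notation x := ('X%:P : R).
Local Notation y := ('X : R).

Lemma coefXY_xi i j : coefXY (xi k m) i j = xi_coef k m i j.
Proof.
rewrite /coefXY /xi /xi_coef coef_poly.
case: ltnP => lt_j; rewrite ?coef0 ?coef_poly; last by do 2?case: ifP => //; lia.
by case: ltnP => lt_i //; do 2?case: ifP => //; lia.
Qed.

Lemma coefXY_exp_1subxy n i j :
  coefXY ((1 - x * y) ^+ n) i j = if i == j then (-1) ^+ i *+ 'C(n, i) else 0.
Proof.
elim: n i j => [|n IHn] i j.
  by rewrite expr0 coefXY1; case: i => [|i]; case: j => [|j] //=; case: ifP.
rewrite exprS mulrBl mul1r -mulrA coefXYB coefXYxM IHn.
case: i => [|i]; rewrite ?coefXYyM; case: j => [|j] //=; rewrite ?subr0 ?bin0 //.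
rewrite IHn eqSS; case: eqP => [->|_]; last by rewrite subr0.
by rewrite binS mulrnDr exprS mulN1r !mulNrn.
Qed.

Lemma coefXY_exp_1suby n i j :
  coefXY ((1 - y) ^+ n) i j = if i == 0 then (-1) ^+ j *+ 'C(n, j) else 0.
Proof.
elim: n i j => [|n IHn] i j.
  by rewrite expr0 coefXY1; case: i => [|i]; case: j => [|j].
rewrite exprS mulrBl mul1r coefXYB coefXYyM IHn.
case: j => [|j]; rewrite ?IHn; case: (i == 0); rewrite ?subr0 ?bin0 ?subrr //.
by rewrite binS mulrnDr exprS mulN1r !mulNrn.
Qed.

Lemma xi_identity :
  (1 - x) * xi k m = (1 - x * y) ^+ m.+1 - x ^+ m * (1 - y) ^+ m.+1.
Proof.
apply: coefXY_ext => i j.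
rewrite mulrBl mul1r !coefXYB coefXYxM coefXY_exp_1subxy coefXYxnM coefXY_exp_1suby.
case: i => [|i] /=; rewrite !coefXY_xi /xi_coef.
all: do ![case: eqP => [?|?] /= || case: leqP => ? /=]; subst.
all: rewrite ?subr0 ?sub0r ?subrr //; try lia.
all: rewrite ?binn ?exprS ?mulN1r ?opprK //.
all: by rewrite bin_small ?mulr0n ?oppr0 //; lia.
Qed.

Lemma shiftXY_xi_identity : - x * shiftXY (xi k m) 1 1 =
  (1 - (x + 1) * (y + 1)) ^+ m.+1 - (x + 1) ^+ m * (- y) ^+ m.+1.
Proof.
have sub1D (t : R) : 1 - (t + 1) = - t by ring.
have := congr1 (fun p : R => shiftXY p 1 1) xi_identity.
by rewrite !(shiftXYM, shiftXYB, shiftXYX, shiftXY1, shiftXYx, shiftXYy) !polyC1 !sub1D.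
Qed.

Lemma xi_vanishes_atleast : vanishes_atleast (xi k m) 1 1 m.
Proof.
apply: vanishes_at0xM; rewrite -[x * _]opprK -mulNr shiftXY_xi_identity.
apply/vanishes_at0N/vanishes_at0B; last first.
  by apply/vanishes_at0Ml/vanishes_at0X/vanishes_at0N/vanishes_at0y.
have -> : 1 - (x + 1) * (y + 1) = - (x * y + x + y) by ring.
apply/vanishes_at0X/vanishes_at0N/vanishes_at0D/vanishes_at0y.
exact/vanishes_at0D/vanishes_at0x/vanishes_at0Ml/vanishes_at0y.
Qed.

Lemma coefXY_shift_xi : coefXY (shiftXY (xi k m) 1 1) m 0 = (-1) ^+ m.
Proof.
have := congr1 (fun p : R => p.[0]`_m.+1) shiftXY_xi_identity.
have sub1D : 1 - ('X + 1) = - 'X :> {poly k} by ring.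
rewrite /= !hornerE oppr0 expr0n /= mulr0 subr0 sub1D mulNr coefN coefXM /=.
rewrite [(- 'X) ^+ _]exprNn coefMXn ltnn subnn -polyC1 -polyCN -polyC_exp coefC.
rewrite horner_coef0 => /eqP.
by rewrite eqr_oppLR exprS mulN1r opprK => /eqP.
Qed.

Lemma xi_vanishes_to_order : vanishes_to_order (xi k m) 1 1 m.
Proof.
split; first exact: xi_vanishes_atleast.
by move=> /(_ m 0%N); rewrite addn0 coefXY_shift_xi => /(_ (ltnSn m)) /eqP; rewrite signr_eq0.
Qed.

Lemma xi_top_coef : (xi k m)`_m.+1 = (-1) ^+ m *: 'X^m.
Proof.
apply/polyP => i; rewrite -/(coefXY (xi k m) i m.+1) coefXY_xi coefZ coefXn /xi_coef eqxx andbT.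
by case: eqVneq => _; rewrite ?mulr1 ?mulr0 //; case: ifP => //; lia.
Qed.

Lemma coefXY_xi00 : (0 < m)%N -> coefXY (xi k m) 0 0 = 1.
Proof. by move=> m_gt0; rewrite coefXY_xi /xi_coef m_gt0 /= expr0 bin0; case: eqP => //; lia. Qed.

Lemma size_xi : size (xi k m) = m.+2.
Proof.
apply/anti_leq/andP; split; first exact: size_poly.
rewrite ltnNge; apply/negP => /leq_sizeP /(_ m.+1 (leqnn _)).
rewrite xi_top_coef => /(congr1 (fun p : {poly k} => p`_m)) /eqP.
by rewrite coefZ coefXn eqxx mulr1 coef0 signr_eq0.
Qed.

End Xi.

Section LowerTriangular.
Variable k : comNzRingType.
Local Notation R := {poly {poly k}}.
Local Notation x := ('X%:P : R).
Local Notation y := ('X : R).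

Definition lower_triangular (p : R) (n : nat) : Prop :=
  forall i j, coefXY p i j != 0 -> (j <= i < n)%N.

Lemma coef_horner1 (p : R) i : p.[1]`_i = \sum_(j < size p) coefXY p i j.
Proof.
by rewrite horner_coef coef_sum; apply: eq_bigr => j _; rewrite expr1n mulr1.
Qed.

Lemma size_comp_XaddC_leq (q : {poly k}) (a : k) : (size (q \Po ('X + a%:P)) <= size q)%N.
Proof.
have [-> | nz_q] := eqVneq q 0; first by rewrite comp_poly0.
rewrite (leq_trans (size_comp_poly_leq _ _)) // size_XaddC muln1.
by rewrite prednK ?size_poly_gt0.
Qed.

Lemma lower_triangular_horner1_eq0 (p : R) n :
  lower_triangular p n -> vanishes_atleast p 1 1 n -> p.[1] = 0.
Proof.
move=> p_low p_van.
have size_p1 : (size p.[1] <= n)%N.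
  apply/leq_sizeP => i le_ni; rewrite coef_horner1 big1 // => j _.
  by apply/eqP; apply: contraT => /p_low; lia.
rewrite -[p.[1]](comp_polyXaddC_K _ 1) -shiftXY_coef0.
suff -> : (shiftXY p 1 1)`_0 = 0 by rewrite comp_poly0.
apply/eqP; rewrite -size_poly_leq0; apply/leq_sizeP => i _.
have [lt_in | le_ni] := ltnP i n; first by have := p_van i 0%N; rewrite addn0; apply.
apply: nth_default; rewrite shiftXY_coef0.
exact: leq_trans (size_comp_XaddC_leq _ _) (leq_trans size_p1 le_ni).
Qed.

Lemma coefXY_mulyB1 (p : R) i j :
  coefXY (p * (y - 1)) i j = (if j is j'.+1 then coefXY p i j' else 0) - coefXY p i j.
Proof. by rewrite mulrBr mulr1 coefXYB mulrC coefXYyM. Qed.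

(* Downward induction on j, from the y-degree of p1: p_(i,j+1) = p1_(i,j) - p1_(i,j+1). *)
Lemma coefXY_divyB1_eq0 (p p1 : R) i j : p = p1 * (y - 1) ->
  (forall l, (j < l)%N -> coefXY p i l = 0) -> coefXY p1 i j = 0.
Proof.
move=> Dp p_0.
suff p1_0 : forall d l, (j <= l)%N -> (size p1 <= l + d)%N -> coefXY p1 i l = 0.
  by apply: (p1_0 (size p1)); rewrite ?leq_addl.
elim=> [|d IHd] l le_jl le_s.
  by rewrite addn0 in le_s; rewrite /coefXY [p1`_l]nth_default // coef0.
have := congr1 (fun q => coefXY q i l.+1) Dp; rewrite /= coefXY_mulyB1.
by rewrite (IHd l.+1) ?subr0 ?addSnnS ?(leqW le_jl) // => <-; apply: p_0.
Qed.

Lemma lower_triangular_divyB1 (p p1 : R) n :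
  lower_triangular p n.+1 -> p = p1 * (y - 1) ->
  p1 = x * map_poly (drop_poly 1) p1 /\ lower_triangular (map_poly (drop_poly 1) p1) n.
Proof.
move=> p_low Dp.
have p1_0 i j : (i <= j)%N || (n < i)%N -> coefXY p1 i j = 0.
  move=> out; apply: (coefXY_divyB1_eq0 Dp) => l lt_jl.
  by apply/eqP; apply: contraT => /p_low; lia.
have coef_drop i j : coefXY (map_poly (drop_poly 1) p1) i j = coefXY p1 i.+1 j.
  by rewrite /coefXY coef_map_id0 ?drop_poly0r // coef_drop_poly addn1.
split.
  by apply: coefXY_ext => -[|i] j; rewrite coefXYxM ?coef_drop // p1_0.
by move=> i j; rewrite coef_drop; apply: contraNT => out; rewrite p1_0 //; lia.
Qed.

Lemma lower_triangular_vanishing_eq0 (p : R) n :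
  lower_triangular p n -> vanishes_atleast p 1 1 n -> p = 0.
Proof.
elim: n p => [|n IHn] p p_low p_van.
  apply: coefXY_ext => i j; rewrite [RHS]/coefXY !coef0.
  by apply/eqP; apply: contraT => /p_low; rewrite ltn0 andbF.
have /factor_theorem [p1 Dp] : root p 1 by apply/eqP; apply: lower_triangular_horner1_eq0 p_van.
rewrite polyC1 in Dp; have [Dp1 p2_low] := lower_triangular_divyB1 p_low Dp.
set p2 := map_poly _ p1 in Dp1 p2_low.
suff p2_0 : p2 = 0 by rewrite Dp Dp1 p2_0 mulr0 mul0r.
apply: IHn p2_low _; apply/vanishes_at0x1M/vanishes_at0yM.
move: p_van; rewrite /vanishes_atleast Dp Dp1 !shiftXYM shiftXYB shiftXYx shiftXYy shiftXY1.
by rewrite !polyC1 addrK mulrC mulrA.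
Qed.

End LowerTriangular.

Lemma in_conv_hull_mem (S : seq (rat * rat)) z : z \in S -> in_conv_hull S z.
Proof.
move=> zS; pose i0 : 'I_(size S) := Ordinal (etrans (index_mem z S) zS).
have S_i0 : S`_i0 = z by rewrite nth_index.
have pick (f : 'I_(size S) -> rat) : \sum_i (i == i0)%:R * f i = f i0.
  rewrite (bigD1 i0) // big1 /= => [|i /negbTE ->]; last by rewrite mul0r.
  by rewrite eqxx mul1r addr0.
exists (fun i => (i == i0)%:R); split; first by move=> i; rewrite ler0n.
split; first by have := pick (fun=> 1); under eq_bigr do rewrite mulr1.
by rewrite !pick S_i0.
Qed.

Lemma in_conv_hull_trans (S T : seq (rat * rat)) z :
  (forall s, s \in S -> in_conv_hull T s) -> in_conv_hull S z -> in_conv_hull T z.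
Proof.
move=> ST [w [w_ge0 [w_sum1 [w_x w_y]]]].
have /fin_all_exists [l l_S] (i : 'I_(size S)) : in_conv_hull T S`_i by apply/ST/mem_nth.
have l_ge0 i t : 0 <= l i t by case: (l_S i).
have l_sum1 i : \sum_t l i t = 1 by case: (l_S i) => _ [].
have l_x i : \sum_t l i t * (T`_t).1 = (S`_i).1 by case: (l_S i) => _ [_ []].
have l_y i : \sum_t l i t * (T`_t).2 = (S`_i).2 by case: (l_S i) => _ [_ [_]].
have sum_comb (f : 'I_(size T) -> rat) :
    \sum_t (\sum_i w i * l i t) * f t = \sum_i w i * \sum_t l i t * f t.
  under eq_bigr do rewrite mulr_suml.
  rewrite exchange_big; apply: eq_bigr => i _.
  by rewrite mulr_sumr; apply: eq_bigr => t _; rewrite mulrA.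
exists (fun t => \sum_i w i * l i t); split; last split; last split.
- by move=> t; apply: sumr_ge0 => i _; apply: mulr_ge0.
- transitivity (\sum_t (\sum_i w i * l i t) * 1); first by under [in RHS]eq_bigr do rewrite mulr1.
  rewrite sum_comb -[RHS]w_sum1; apply: eq_bigr => i _.
  by under eq_bigr do rewrite mulr1; rewrite l_sum1 mulr1.
- by rewrite sum_comb -w_x; under eq_bigr do rewrite l_x.
- by rewrite sum_comb -w_y; under eq_bigr do rewrite l_y.
Qed.

Lemma big_ord3 (V : nmodType) (f : 'I_3 -> V) :
  \sum_i f i = f ord0 + f (lift ord0 ord0) + f ord_max.
Proof.
rewrite !big_ord_recl big_ord0 /= addr0 addrA; congr (_ + _ + f _); exact: val_inj.
Qed.

Lemma natr_pred (R : pzRingType) n : (0 < n)%N -> (n.-1)%:R = n%:R - 1 :> R.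
Proof. by move=> n_gt0; rewrite -[in RHS](prednK n_gt0) -natr1 addrK. Qed.

Section Triangle.
Variables (m : nat) (m_gt0 : (0 < m)%N).
Local Notation M := (m%:R : rat).

Lemma triangle_mE z : triangle_m m z <-> exists a b c : rat,
  [/\ 0 <= a, 0 <= b, 0 <= c, a + b + c = 1 & z = (b * (M - 1) + c * M, c * (M + 1))].
Proof.
split=> [[w [w_ge0 [w_sum [w_x w_y]]]] | [a [b [c [a_ge0 b_ge0 c_ge0 abc ->]]]]].
  exists (w ord0), (w (lift ord0 ord0)), (w ord_max); split => //; first by rewrite -big_ord3.
  rewrite [z]surjective_pairing -w_x -w_y !big_ord3 /= (natr_pred _ m_gt0) -natr1.
  by congr (_, _); ring.
pose w (t : 'I_3) : rat := [:: a; b; c]`_t.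
exists w; rewrite !big_ord3 /w /= (natr_pred _ m_gt0) -natr1.
split; last split; [| exact: abc | split; ring].
by move=> -[[|[|[|t]]] lt_t3].
Qed.

Lemma triangle_lattice_triangle_m i j : triangle_lattice m i j -> triangle_m m (i%:R, j%:R).
Proof.
case/orP=> [/andP [le_ji lt_im] | /andP [/eqP-> /eqP->]]; apply/triangle_mE.
  have [i0 | i_gt0] := posnP i.
    have j0 : j = 0%N by lia.
    by exists 1, 0, 0; rewrite i0 j0 !mul0r !addr0.
  have M_ge2 : 2 <= M by rewrite (ler_nat _ 2); lia.
  have le_JI : (j%:R : rat) <= i%:R by rewrite ler_nat.
  have le_IM : (i%:R : rat) <= M - 1 by rewrite -(natr_pred _ m_gt0) ler_nat; lia.
  pose c : rat := j%:R / (M + 1); pose b := (i%:R - M * c) / (M - 1).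
  have Ec : c * (M + 1) = j%:R by rewrite divfK //; lra.
  have Eb : b * (M - 1) = i%:R - M * c by rewrite divfK //; lra.
  have c_ge0 : 0 <= c by rewrite divr_ge0 //; lra.
  have c_le1 : c <= 1 by rewrite ler_pdivrMr; lra.
  have b_ge0 : 0 <= b by rewrite divr_ge0 //; nra.
  have b_le : b <= 1 - c by rewrite ler_pdivrMr; nra.
  clearbody b c; exists (1 - b - c), b, c; split; rewrite ?subr_ge0 //; first lra.
    by ring.
  by congr (_, _); lra.
by exists 0, 0, 1; rewrite !mul0r !add0r !mul1r -natr1.
Qed.

Lemma triangle_m_triangle_lattice i j : triangle_m m (i%:R, j%:R) -> triangle_lattice m i j.
Proof.
case/triangle_mE=> [a [b [c [a_ge0 b_ge0 c_ge0 abc [Ei Ej]]]]].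
have M_ge1 : 1 <= M by rewrite ler1n.
have [c1 | c_neq1] := eqVneq c 1.
  have b0 : b = 0 by lra.
  have [-> ->] : i = m /\ j = m.+1.
    by split; apply/eqP; rewrite -(eqr_nat rat) ?Ei ?Ej ?b0 c1 -?natr1; apply/eqP; ring.
  by rewrite /triangle_lattice !eqxx orbT.
have c_lt1 : c < 1 by rewrite lt_neqAle c_neq1; lra.
have lt_im : (i < m)%N by rewrite -(ltr_nat rat) Ei; nra.
have le_mj : (m * j <= m.+1 * i)%N.
  rewrite -(ler_nat rat) !natrM Ei Ej -natr1 -subr_ge0.
  have -> : (M + 1) * (b * (M - 1) + c * M) - M * (c * (M + 1)) = b * ((M - 1) * (M + 1)) by ring.
  by apply: mulr_ge0 => //; apply: mulr_ge0; lra.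
by rewrite /triangle_lattice lt_im andbT; nia.
Qed.
End Triangle.

Section NewtonPolygon.
Variable k : nzRingType.
Implicit Type p : {poly {poly k}}.

Lemma mem_supportXY p i j : coefXY p i j != 0 -> (i%:R, j%:R) \in supportXY p.
Proof.
move=> nz_pij; apply/mapP; exists (i, j) => //; rewrite mem_filter nz_pij /=.
apply/allpairsPdep; exists j, i; rewrite !mem_iota !add0n /=; split=> //.
  by rewrite ltnNge; apply: contra nz_pij => le_pj; rewrite /coefXY [p`_j]nth_default ?coef0.
by rewrite ltnNge; apply: contra nz_pij => le_pji; rewrite /coefXY nth_default.
Qed.

Lemma supportXYP p z : z \in supportXY p ->
  exists i j : nat, z = (i%:R, j%:R) /\ coefXY p i j != 0.
Proof. by case/mapP=> -[i j]; rewrite mem_filter => /andP [nz_pij _] ->; exists i, j. Qed.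

Variables (m : nat) (m_gt0 : (0 < m)%N).

Lemma newton_polygon_triangle_lattice p i j :
  (forall z, newton_polygon p z -> triangle_m m z) ->
  coefXY p i j != 0 -> triangle_lattice m i j.
Proof.
by move=> p_tri /mem_supportXY/in_conv_hull_mem/p_tri; apply: triangle_m_triangle_lattice.
Qed.

Lemma newton_polygon_triangle_m p :
  (forall i j, coefXY p i j != 0 -> triangle_lattice m i j) ->
  coefXY p 0 0 != 0 -> coefXY p m.-1 0 != 0 -> coefXY p m m.+1 != 0 ->
  forall z, newton_polygon p z <-> triangle_m m z.
Proof.
move=> p_tri p00 p_m0 p_mm z; split; apply: in_conv_hull_trans.
  move=> _ /supportXYP [i [j [-> /p_tri]]].
  exact: triangle_lattice_triangle_m.
move=> s; rewrite !inE => /or3P [] /eqP ->; apply/in_conv_hull_mem.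
- exact: (mem_supportXY p00).
- exact: (mem_supportXY p_m0).
- exact: (mem_supportXY p_mm).
Qed.

End NewtonPolygon.

(* The term of least degree in X cannot cancel. *)
Lemma sum_XnM_neq0 (K : idomainType) (I : finType) (P : pred I) (H : I -> {poly K})
    (N : I -> nat) (j0 : I) :
  P j0 -> {in P &, injective N} -> (forall j, P j -> (H j).[0] != 0) ->
  \sum_(j | P j) H j * 'X^(N j) != 0.
Proof.
move=> P_j0 N_inj H_0; case: (arg_minnP N P_j0) => j1 P_j1 N_j1_min.
have -> : \sum_(j | P j) H j * 'X^(N j) = 'X^(N j1) * \sum_(j | P j) H j * 'X^(N j - N j1).
  by rewrite mulr_sumr; apply: eq_bigr => j P_j; rewrite mulrCA -exprD subnKC ?N_j1_min.
rewrite mulf_neq0 ?expf_neq0 ?polyX_eq0 //.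
apply: contraTneq (H_0 j1 P_j1) => /(congr1 (horner^~ 0)).
rewrite horner_sum hornerC (bigD1 j1) //= subnn expr0 mulr1 big1 ?addr0 => [-> |].
  by rewrite eqxx.
move=> j /andP [P_j ne_j]; rewrite hornerM hornerXn expr0n subn_eq0.
case: leqP => [le_N | _]; last by rewrite mulr0.
by rewrite (N_inj j j1) ?eqxx // in ne_j; apply/eqP; rewrite eqn_leq le_N N_j1_min.
Qed.

Lemma poly_factor_Xn (K : nzRingType) (p : {poly K}) :
  p != 0 -> exists (G : {poly K}) (a : nat), p = G * 'X^a /\ G.[0] != 0.
Proof.
move=> nz_p; case: (multiplicity_XsubC p 0) => a [G]; rewrite nz_p /= subr0 => nroot Dp.
by exists G, a.
Qed.

Lemma curve_exponent_modn m a j : (j <= m -> (m.+1 * a + m * (m - j) + m) %% m.+1 = j)%N.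
Proof.
move=> le_jm; have -> : (m.+1 * a + m * (m - j) + m = m.+1 * (a + (m - j)) + j)%N by nia.
by rewrite mulnC modnMDl modn_small.
Qed.

Section RationalCurve.
Variables (k : fieldType) (m : nat) (m_gt0 : (0 < m)%N).
Local Notation R := {poly {poly k}}.
Local Notation F := {fraction {poly k}}.
Local Notation x := ('X%:P : R).
Local Notation y := ('X : R).
Local Notation tofrac := (@FracField.tofrac {poly k}).
Local Notation "a %:F" := (tofrac a) (format "a %:F").

Definition curve_S : {poly k} := \sum_(i < m) 'X^i.
Definition curve_t : F := 'X%:F.
Definition curve_y : F := - curve_S%:F / curve_t ^+ m.

Definition eval_curve (q : R) : F :=
  (map_poly (tofrac \o comp_poly 'X^(m.+1)) q).[curve_y].

Lemma eval_curveM p q : eval_curve (p * q) = eval_curve p * eval_curve q.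
Proof. by rewrite /eval_curve rmorphM hornerM. Qed.

Lemma eval_curveB p q : eval_curve (p - q) = eval_curve p - eval_curve q.
Proof. by rewrite /eval_curve rmorphB hornerD hornerN. Qed.

Lemma eval_curve1 : eval_curve 1 = 1.
Proof. by rewrite /eval_curve rmorph1 hornerC. Qed.

Lemma eval_curveX p n : eval_curve (p ^+ n) = eval_curve p ^+ n.
Proof. by rewrite /eval_curve rmorphXn horner_exp. Qed.

Lemma eval_curve_x : eval_curve x = curve_t ^+ m.+1.
Proof. by rewrite /eval_curve map_polyC hornerC /= comp_polyX rmorphXn. Qed.

Lemma eval_curve_y : eval_curve y = curve_y.
Proof. by rewrite /eval_curve map_polyX hornerX. Qed.

Lemma curve_t_neq0 : curve_t != 0.
Proof. by rewrite tofrac_eq0 polyX_eq0. Qed.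

Lemma curve_S_geom : 'X^m + curve_S = 1 + 'X * curve_S.
Proof.
rewrite /curve_S mulr_sumr; under [in RHS]eq_bigr do rewrite -exprS.
by rewrite -[in RHS](big_ord_recl m (fun i => 'X^i)) big_ord_recr addrC.
Qed.

Lemma eval_curve_xi : eval_curve (xi k m) = 0.
Proof.
have := congr1 eval_curve (xi_identity k m).
rewrite !(eval_curveM, eval_curveB, eval_curveX, eval_curve1, eval_curve_x, eval_curve_y).
set t := curve_t; set s := curve_S%:F.
have tm_neq0 : t ^+ m != 0 by rewrite expf_neq0 ?curve_t_neq0.
have geom : t ^+ m + s = 1 + t * s.
  by rewrite /t /s /curve_t -tofracXn -tofracM -tofrac1 -!tofracD curve_S_geom.
have xy_eq : 1 - t ^+ m.+1 * curve_y = 1 + t * s.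
  by rewrite /curve_y exprS -mulrA [t ^+ m * _]mulrC divfK // mulrN opprK.
have y_eq : 1 - curve_y = (1 + t * s) / t ^+ m.
  by rewrite -geom mulrDl divff // /curve_y mulNr opprK.
rewrite xy_eq y_eq expr_div_n -!exprM [(m.+1 * m)%N]mulnC mulrCA.
rewrite divff ?(expf_neq0 _ curve_t_neq0) // mulr1 subrr.
move/eqP; rewrite mulf_eq0 subr_eq0 => /orP [|/eqP //].
rewrite /t /curve_t -tofracXn -tofrac1 tofrac_eq => /eqP /(congr1 (fun p : {poly k} => p`_0)).
by rewrite coef1 coefXn => /eqP; rewrite oner_eq0.
Qed.

Definition curve_num (q : R) : {poly k} :=
  \sum_(j < m.+1) (q`_j \Po 'X^(m.+1)) * (- curve_S) ^+ j * 'X^(m * (m - j)).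

Lemma eval_curve_num (q : R) : (size q <= m.+1)%N ->
  (curve_t ^+ m) ^+ m * eval_curve q = (curve_num q)%:F.
Proof.
move=> le_qm; have le_fqm : (size (map_poly (tofrac \o comp_poly 'X^(m.+1)) q) <= m.+1)%N.
  exact: leq_trans (size_poly _ _) le_qm.
rewrite /eval_curve (horner_coef_wide _ le_fqm) mulr_sumr /curve_num rmorph_sum.
apply: eq_bigr => -[j /= lt_jm] _.
rewrite coef_map /= !tofracM !tofracXn tofracN /curve_y expr_div_n exprM.
have u_neq0 n : curve_t ^+ m ^+ n != 0 by rewrite !expf_neq0 ?curve_t_neq0.
have -> : curve_t ^+ m ^+ m = curve_t ^+ m ^+ (m - j) * curve_t ^+ m ^+ j.
  by rewrite -exprD subnK.
rewrite -mulrA [RHS]mulrC; congr (_ * _).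
by rewrite mulrCA [curve_t ^+ m ^+ j * _]mulrC (divfK (u_neq0 j)).
Qed.

Lemma curve_S0 : curve_S.[0] = 1.
Proof.
rewrite /curve_S horner_sum (bigD1 (Ordinal m_gt0)) //= expr0 hornerC big1 ?addr0 // => i.
by rewrite -val_eqE /= hornerXn expr0n => /negbTE ->.
Qed.

(* The t-adic valuations of the terms of curve_num are pairwise distinct modulo m + 1. *)
Lemma curve_num_neq0 (q : R) : q != 0 -> (size q <= m.+1)%N -> curve_num q != 0.
Proof.
move=> nz_q le_qm.
have /fin_all_exists [Ga Ga_spec] (j : 'I_m.+1) : exists Ga : {poly k} * nat,
    q`_j != 0 -> q`_j = Ga.1 * 'X^(Ga.2) /\ Ga.1.[0] != 0.
  have [/poly_factor_Xn [G [a Dq]] | _] := boolP (q`_j != 0); first by exists (G, a).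
  by exists (0, 0%N).
pose H j := ((Ga j).1 \Po 'X^(m.+1)) * (- curve_S) ^+ j.
pose N (j : 'I_m.+1) := (m.+1 * (Ga j).2 + m * (m - j))%N.
have -> : curve_num q = \sum_(j : 'I_m.+1 | q`_j != 0) H j * 'X^(N j).
  rewrite /curve_num (bigID (fun j : 'I_m.+1 => q`_j != 0)) /= [X in _ + X]big1 ?addr0.
    apply: eq_bigr => j /Ga_spec [Dqj _]; rewrite Dqj comp_polyM rmorphXn /= comp_polyX.
    by rewrite /H /N exprD -exprM mulrA; congr (_ * _); exact: mulrAC.
  by move=> j /negPn /eqP ->; rewrite comp_poly0 !mul0r.
have lt_top : ((size q).-1 < m.+1)%N by rewrite prednK ?size_poly_gt0.
apply: (@sum_XnM_neq0 _ _ _ _ _ (Ordinal lt_top)).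
- by rewrite /= -lead_coefE lead_coef_eq0.
- move=> j1 j2 _ _ /(congr1 (fun n => (n + m) %% m.+1)%N) /=.
  by rewrite !curve_exponent_modn ?leq_ord // => /val_inj.
- move=> j /Ga_spec [_ G0]; rewrite /H hornerM horner_comp hornerXn expr0n /= horner_exp.
  by rewrite hornerN curve_S0 mulf_neq0 // expf_neq0 // oppr_eq0 oner_eq0.
Qed.

Lemma eval_curve_eq0 (q : R) : (size q <= m.+1)%N -> eval_curve q = 0 -> q = 0.
Proof.
move=> le_qm q_0; apply/eqP; apply: contraT => nz_q.
have := curve_num_neq0 nz_q le_qm.
by rewrite -tofrac_eq0 -eval_curve_num // q_0 mulr0 eqxx.
Qed.

End RationalCurve.

Section XiIrreducible.
Variables (k : closedFieldType) (m : nat) (m_gt0 : (0 < m)%N).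
Local Notation R := {poly {poly k}}.
Local Notation Xi := (xi k m).

Lemma xi_factor_unit (q r : R) : Xi = q * r -> eval_curve m q = 0 -> r \is a GRing.unit.
Proof.
move=> Dxi q_0.
have [nz_q nz_r] : q != 0 /\ r != 0.
  by apply/andP; rewrite -negb_or -mulf_eq0 -Dxi -size_poly_eq0 size_xi.
have size_q : (m.+2 <= size q)%N.
  by rewrite ltnNge; apply: contra nz_q => le_qm; apply/eqP; apply: eval_curve_eq0 le_qm q_0.
have /size_poly1P [r0 nz_r0 Dr] : size r == 1%N.
  have := size_xi k m; rewrite Dxi size_mul // => size_qr; apply/eqP.
  (* Generalizing the sizes identifies their syntactically different instances for lia. *)
  move: size_qr size_q nz_r; rewrite -size_poly_gt0; move: (size q) (size r) => a b; lia.
have coef_xi j : Xi`_j = q`_j * r0 by rewrite Dxi Dr coefMC.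
suff /size_poly1P [c nz_c Dr0] : size r0 == 1%N.
  by rewrite Dr Dr0 !poly_unitE !size_polyC !coefC /= polyC_eq0 nz_c size_polyC nz_c unitfE.
apply: contraT => /closed_rootP [z /eqP r0_z].
have z0 : z = 0.
  move/(congr1 (horner^~ z)): (coef_xi m.+1).
  rewrite xi_top_coef hornerM r0_z mulr0 hornerZ hornerXn.
  by move/eqP; rewrite mulf_eq0 signr_eq0 expf_eq0 /= => /andP [_ /eqP].
have := coefXY_xi00 k m_gt0.
rewrite /coefXY coef_xi -horner_coef0 hornerM -z0 r0_z mulr0 => /esym/eqP.
by rewrite oner_eq0.
Qed.

Lemma xi_irreducible : irreducibleXY Xi.
Proof.
split; first by rewrite -size_poly_eq0 size_xi.
split=> [|q r Dxi]; first by rewrite poly_unitE size_xi.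
have /eqP := eval_curve_xi k m; rewrite Dxi eval_curveM mulf_eq0 => /orP [/eqP q_0 | /eqP r_0].
  by right; apply: xi_factor_unit Dxi q_0.
by left; apply: (@xi_factor_unit r q) => //; rewrite mulrC.
Qed.

End XiIrreducible.

Section XiSupport.
Variables (k : comNzRingType) (m : nat).
Local Notation R := {poly {poly k}}.

Lemma xi_coef_triangle_lattice i j : xi_coef k m i j != 0 -> triangle_lattice m i j.
Proof.
by rewrite /xi_coef /triangle_lattice; do 2?case: ifP => // _; rewrite ?orbT ?eqxx.
Qed.

Lemma xi_newton_polygon : (0 < m)%N -> forall z, newton_polygon (xi k m) z <-> triangle_m m z.
Proof.
move=> m_gt0; apply: newton_polygon_triangle_m => //.
- by move=> i j; rewrite coefXY_xi; apply: xi_coef_triangle_lattice.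
- by rewrite coefXY_xi00 ?oner_eq0.
- by rewrite coefXY_xi /xi_coef andbF /= ltn_predL m_gt0 expr0 bin0 oner_eq0.
- by rewrite coefXY_xi /xi_coef !eqxx signr_eq0.
Qed.

(* The coefficient of xi_m at the apex (m, m+1) is (-1)^m. *)
Lemma sub_xi_lower_triangular (q : R) :
  (forall i j, coefXY q i j != 0 -> triangle_lattice m i j) ->
  lower_triangular (q - (coefXY q m m.+1 * (-1) ^+ m)%:P%:P * xi k m) m.
Proof.
move=> q_tri i j; rewrite coefXYB coefXYCM coefXY_xi => nz_ij.
have [/andP [/eqP Ei /eqP Ej] | not_apex] := boolP ((i == m) && (j == m.+1)).
  by move: nz_ij; rewrite Ei Ej /xi_coef !eqxx /= -mulrA -expr2 sqrr_sign mulr1 subrr eqxx.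
have : (coefXY q i j != 0) || (xi_coef k m i j != 0).
  by apply: contraNT nz_ij; rewrite negb_or !negbK => /andP [/eqP -> /eqP ->]; rewrite mulr0 subrr.
case/orP=> [/q_tri | /xi_coef_triangle_lattice];
  by rewrite /triangle_lattice (negbTE not_apex) orbF.
Qed.

End XiSupport.

Lemma xi_property_xi (k : closedFieldType) (m : nat) : (0 < m)%N -> xi_property m (xi k m).
Proof.
move=> m_gt0; split; first exact: xi_irreducible.
  exact: xi_vanishes_to_order.
exact: xi_newton_polygon.
Qed.

Theorem theorem1p1 (k : closedFieldType) (hchar : [pchar k] =i pred0)
  (m : nat) (hm : (1 <= m)%N) :
  exists xi : {poly {poly k}},
    xi_property m xi /\
    forall q : {poly {poly k}}, xi_property m q ->
      exists c : k, c != 0 /\ q = (c%:P)%:P * xi.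
Proof.
exists (xi k m); split; first exact: xi_property_xi.
move=> q [[nz_q _] [q_van _] q_newton].
pose c := coefXY q m m.+1 * (-1) ^+ m.
have q_tri i j : coefXY q i j != 0 -> triangle_lattice m i j.
  by apply: newton_polygon_triangle_lattice => // z /q_newton.
have diff_van : vanishes_atleast (q - c%:P%:P * xi k m) 1 1 m.
  rewrite /vanishes_atleast shiftXYB shiftXYM shiftXYC.
  exact/vanishes_at0B/vanishes_at0Ml/xi_vanishes_atleast.
have /eqP := lower_triangular_vanishing_eq0 (sub_xi_lower_triangular q_tri) diff_van.
rewrite subr_eq0 => /eqP Dq; exists c; split=> //.
by apply: contraNneq nz_q => c0; rewrite Dq -/c c0 !polyC0 mul0r.
Qed.
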